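(* Let $\{X_t\}_{t\in\mathbb N^+}$ be a real-valued process adapted to a filtration $\{\mathcal F_t\}_{t\in\mathbb N}$ with $\mathcal F_0$ trivial, such that for all $t\in\mathbb N^+$, $\mathbb E[X_t\mid\mathcal F_{t-1}]=\mu$ (a constant) and $\mathbb E[(X_t-\mu)^2\mid\mathcal F_{t-1}]\le\sigma^2$. Let $\alpha\in(0,1)$, let $\phi$ be a Catoni-type influence function, and let $\{\lambda_t\}_{t\in\mathbb N^+}$ be nonrandom positive numbers. Define $$\mathrm{CI}^{\mathsf C}_t=\left\{m\in\mathbb R:\ -\frac{\sigma^2\sum_{i=1}^t\lambda_i^2}{2}-\log(2/\alpha)\le\sum_{i=1}^t\phi(\lambda_i(X_i-m))\le\frac{\sigma^2\sum_{i=1}^t\lambda_i^2}{2}+\log(2/\alpha)\right\},$$ and let $|\mathrm{CI}^{\mathsf C}_t|$ denote its width (supremum minus infimum). Let $0<\varepsilon<1$ and $t\in\mathbb N^+$ be such that $$\left(\sum_{i=1}^t\lambda_i\right)^2-2\left(\sum_{i=1}^t\lambda_i^2\right)\left(\sigma^2\sum_{i=1}^t\lambda_i^2+\log(2/\varepsilon)+\log(2/\alpha)\right)\ge0.$$ Then, with probability at least $1-\varepsilon$, $$|\mathrm{CI}^{\mathsf C}_t|\le\frac{4\left(\sigma^2\sum_{i=1}^t\lambda_i^2+\log(2/\varepsilon)+\log(2/\alpha)\right)}{\sum_{i=1}^t\lambda_i}.$$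
   Context: A function $\phi:\mathbb R\to\mathbb R$ is a Catoni-type influence function if it is increasing and $-\log(1-x+x^2/2)\le\phi(x)\le\log(1+x+x^2/2)$ for all $x\in\mathbb R$. *)

From HB Require Import structures.
From mathcomp Require Import all_boot all_order all_algebra.
From mathcomp Require Import all_classical all_reals all_analysis.
Set Implicit Arguments. Unset Strict Implicit. Unset Printing Implicit Defensive.
Import Order.TTheory GRing.Theory Num.Theory.
Local Open Scope classical_set_scope.
Local Open Scope ring_scope.

Definition catoni_type {R : realType} (phi : R -> R) : Prop :=
  {homo phi : x y / x <= y} /\
  forall x : R, - ln (1 - x + x ^+ 2 / 2) <= phi x /\ phi x <= ln (1 + x + x ^+ 2 / 2).

Section Defs.
Context {d : measure_display} {T : measurableType d} {R : realType}.

Definition sub_sigma_algebra (G : set (set T)) : Prop :=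
  sigma_algebra setT G /\ G `<=` measurable.

Definition G_measurable (G : set (set T)) (f : T -> R) : Prop :=
  forall B : set R, measurable B -> G (f @^-1` B).

Definition filtration (F : nat -> set (set T)) : Prop :=
  (forall t, sub_sigma_algebra (F t)) /\
  (forall s t, (s <= t)%N -> F s `<=` F t).

Definition trivial_sigma (G : set (set T)) : Prop :=
  forall A, G A -> A = set0 \/ A = setT.

Definition is_cond_exp (P : probability T R) (G : set (set T)) (X Y : T -> R) : Prop :=
  [/\ G_measurable G Y, P.-integrable setT (fun x => (X x)%:E),
      P.-integrable setT (fun x => (Y x)%:E) &
      forall A, G A ->
        (\int[P]_(x in A) (X x)%:E = \int[P]_(x in A) (Y x)%:E)%E].

End Defs.

Definition CI_catoni {R : realType} (phi : R -> R) (lam : nat -> R)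
    (sigma alpha : R) (x : nat -> R) (t : nat) : set R :=
  [set m : R |
    - (sigma ^+ 2 * (\sum_(1 <= i < t.+1) lam i ^+ 2) / 2) - ln (2 / alpha)
      <= \sum_(1 <= i < t.+1) phi (lam i * (x i - m))
    /\ \sum_(1 <= i < t.+1) phi (lam i * (x i - m))
      <= sigma ^+ 2 * (\sum_(1 <= i < t.+1) lam i ^+ 2) / 2 + ln (2 / alpha)].

Definition width {R : realType} (S : set R) : \bar R :=
  (ereal_sup (EFin @` S) - ereal_inf (EFin @` S))%E.

From HB Require Import structures.
From mathcomp Require Import all_boot all_order all_algebra.
From mathcomp Require Import all_classical all_reals all_analysis.
From mathcomp Require Import measurable_realfun ring lra.
Set Implicit Arguments.
Unset Strict Implicit.
Unset Printing Implicit Defensive.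
Import Order.TTheory GRing.Theory Num.Theory.
Local Open Scope classical_set_scope.
Local Open Scope ring_scope.

(* Fix s = 1 or s = -1 and m, and write S(m) = sum_(i <= t) phi (lam_i (X_i - m)),
   L1 = sum_i lam_i, L2 = sum_i lam_i^2. Since exp (s phi y) <= 1 + s y + y^2 / 2,
   conditioning on F_(i-1) and using the conditional mean and variance of X_i gives,
   step by step, E[exp (s S(m))] <= exp (s (mu - m) L1 + (sigma^2 + (mu - m)^2) L2 / 2).
   For m = mu + s d, where d is the smaller root of L2 d^2 / 2 - L1 d + C = 0 and C is
   the numerator of the bound, Markov's inequality shows that with probability at least
   1 - eps / 2 the point mu + s d lies beyond CI_t on the side of s. As S is
   nonincreasing in m, off both events CI_t is contained in [mu - d, mu + d], and
   d <= 2 C / L1. *)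

Lemma width_le (R : realType) (S : set R) (a b : R) :
  S `<=` `[a, b] -> (width S <= (b - a)%:E)%E.
Proof.
move=> Sab; rewrite /width EFinB; apply: leeB.
  apply: ge_ereal_sup => _ [m /Sab /= /[!in_itv] /andP[_ mb] <-].
  by rewrite lee_fin.
apply: le_ereal_inf_tmp => _ [m /Sab /= /[!in_itv] /andP[am _] <-].
by rewrite lee_fin.
Qed.

Lemma nonincreasing_band_sub (R : realType) (S : R -> R) (lo hi a b : R) :
  {homo S : x y /~ x <= y} -> S b < lo -> hi < S a ->
  [set m | lo <= S m /\ S m <= hi] `<=` `[a, b].
Proof.
move=> S_dec Sb Sa m [lom mhi]; rewrite /= in_itv /=; apply/andP; split.
  by rewrite leNgt; apply/negP => /ltW /S_dec; lra.
by rewrite leNgt; apply/negP => /ltW /S_dec; lra.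
Qed.

Lemma sumr_nat_gt0 (R : numDomainType) (f : nat -> R) t : (0 < t)%N ->
  (forall i, (0 < i)%N -> 0 < f i) -> 0 < \sum_(1 <= i < t.+1) f i.
Proof.
move=> t_gt0 f_gt0; rewrite big_nat_recr //=; apply: ltr_wpDl; last exact: f_gt0.
by rewrite big_nat_cond sumr_ge0 // => i /andP[/andP[/f_gt0/ltW]].
Qed.

Lemma quadratic_small_root (R : rcfType) (a b c : R) :
  0 < a -> 0 < b -> 0 <= c -> 0 <= b ^+ 2 - 2 * a * c ->
  exists2 x, a * x ^+ 2 / 2 - b * x + c = 0 & x <= 2 * c / b.
Proof.
move=> a_gt0 b_gt0 c_ge0 disc_ge0.
set r := Num.sqrt (b ^+ 2 - 2 * a * c).
have r_ge0 : 0 <= r by exact: sqrtr_ge0.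
have r2 : r ^+ 2 = b ^+ 2 - 2 * a * c by exact: sqr_sqrtr.
have rb : r <= b by have := mulr_ge0 (ltW a_gt0) c_ge0; nra.
have cE : c = (b ^+ 2 - r ^+ 2) / (2 * a) by rewrite r2; field; exact: lt0r_neq0.
exists ((b - r) / a).
  by rewrite cE; field; exact: lt0r_neq0.
rewrite -subr_ge0 cE.
have -> : 2 * ((b ^+ 2 - r ^+ 2) / (2 * a)) / b - (b - r) / a = (b - r) * r / (a * b).
  by field; rewrite !lt0r_neq0.
by rewrite divr_ge0 ?mulr_ge0 ?subr_ge0 // ltW.
Qed.

Definition catoni_sum (R : realType) (phi : R -> R) (lam x : nat -> R) (m : R)
    (t : nat) : R :=
  \sum_(1 <= i < t.+1) phi (lam i * (x i - m)).

Lemma catoni_sum_nonincreasing (R : realType) (phi : R -> R) (lam x : nat -> R) t :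
  catoni_type phi -> (forall i, (0 < i)%N -> 0 < lam i) ->
  {homo catoni_sum phi lam x ^~ t : m m' /~ m <= m'}.
Proof.
move=> phi_catoni lam_gt0 m m' mm'; apply: ler_sum_nat => i /andP[i_gt0 _].
apply: phi_catoni.1; apply: ler_wpM2l; first exact: ltW (lam_gt0 _ i_gt0).
by rewrite lerB.
Qed.

Lemma width_CI_catoni_le (R : realType) (phi : R -> R) (lam x : nat -> R)
    (sigma alpha m1 m2 : R) t :
  catoni_type phi -> (forall i, (0 < i)%N -> 0 < lam i) ->
  catoni_sum phi lam x m2 t
    < - (sigma ^+ 2 * (\sum_(1 <= i < t.+1) lam i ^+ 2) / 2) - ln (2 / alpha) ->
  sigma ^+ 2 * (\sum_(1 <= i < t.+1) lam i ^+ 2) / 2 + ln (2 / alpha)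
    < catoni_sum phi lam x m1 t ->
  (width (CI_catoni phi lam sigma alpha x t) <= (m2 - m1)%:E)%E.
Proof.
move=> phi_catoni lam_gt0 S_lt S_gt; apply/width_le/(nonincreasing_band_sub _ S_lt S_gt).
exact: catoni_sum_nonincreasing.
Qed.

Lemma markov_expR d (T : measurableType d) (R : realType) (P : probability T R)
    (f : T -> R) (a : R) :
  measurable_fun setT f ->
  (P [set w | (a <= f w)%R] <= \int[P]_w (expR (f w))%:E * (expR (- a))%:E)%E.
Proof.
move=> mf; have := chernoff (mfun_Sub (mem_set mf)) a ltr01.
rewrite /mmt_gen_fun unlock /= => /(_ P); rewrite mul1r.
by under eq_integral do rewrite mulr1.
Qed.

Lemma probability_setC_setU_ge d (T : measurableType d) (R : realType)
    (P : probability T R) (A B : set T) (a b : R) :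
  measurable A -> measurable B -> (P A <= a%:E)%E -> (P B <= b%:E)%E ->
  ((1 - (a + b))%:E <= P (~` (A `|` B)))%E.
Proof.
move=> mA mB PA PB; rewrite probability_setC; last exact: measurableU.
have PAB := le_trans (measureU2 P mA mB) (leeD PA PB).
by apply: le_trans (leeB (lexx 1%E) PAB); rewrite EFinB EFinD.
Qed.

Section sub_sigma_measurability.
Context d (T : measurableType d) (R : realType).
Implicit Types (G : set (set T)) (f : T -> R).

Lemma G_measurableP G f : sigma_algebra setT G ->
  G_measurable G f <->
  measurable_fun [set: g_sigma_algebraType G] (f : g_sigma_algebraType G -> R).
Proof.
move=> sG; split => [Gf _ B mB | mf B mB].
  by rewrite setTI; apply: sub_sigma_algebra; exact: Gf.
by have := mf measurableT B mB; rewrite setTI /measurable /= sigma_algebra_id.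
Qed.

Lemma G_measurableS G G' f : G `<=` G' -> G_measurable G f -> G_measurable G' f.
Proof. by move=> GG' Gf B mB; apply: GG'; exact: Gf. Qed.

Lemma G_measurable_comp G (g : R -> R) f :
  measurable_fun setT g -> G_measurable G f -> G_measurable G (g \o f).
Proof.
move=> mg Gf B mB; rewrite comp_preimage; apply: Gf.
by rewrite -[_ @^-1` _]setTI; exact: mg.
Qed.

Lemma G_measurable_fun G f : G `<=` measurable -> G_measurable G f ->
  measurable_fun setT f.
Proof. by move=> GM Gf _ B mB; rewrite setTI; apply: GM; exact: Gf. Qed.

End sub_sigma_measurability.

Section pull_out.
Context d (T : measurableType d) (R : realType) (P : probability T R).
Variables (G : set (set T)) (Q : T -> R) (c : R).
Hypotheses (GM : G `<=` measurable) (G0 : G set0) (c_ge0 : 0 <= c)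
  (Q_ge0 : forall x, 0 <= Q x) (mQ : measurable_fun setT Q)
  (intQ_le : forall A, G A -> (\int[P]_(x in A) (Q x)%:E <= c%:E * P A)%E).
Implicit Types f g Z : T -> R.

(* The class of [f] that can be pulled out of E[f Q] against the bound E[Q | G] <= c;
   it contains the dyadic approximations of every nonnegative G-measurable function. *)
Definition pulls_out (f : T -> R) :=
  [/\ measurable_fun setT f, (forall x, 0 <= f x) &
      (\int[P]_x (f x * Q x)%:E <= c%:E * \int[P]_x (f x)%:E)%E].

Let measurable_mulQ f : measurable_fun setT f ->
  measurable_fun setT (fun x => (f x * Q x)%:E).
Proof. by move=> mf; apply/measurable_EFinP; exact: measurable_funM. Qed.

Lemma pulls_out0 : pulls_out (fun=> 0).
Proof.
split=> //; under eq_integral do rewrite mul0r.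
by rewrite integral0 mule_ge0 // integral_ge0.
Qed.

Lemma pulls_outD f g : pulls_out f -> pulls_out g -> pulls_out (f \+ g).
Proof.
move=> [mf f0 hf] [mg g0 hg]; split.
- exact: measurable_funD.
- by move=> x /=; rewrite addr_ge0.
under eq_integral do rewrite /= mulrDl EFinD.
rewrite [X in (_ <= _ * X)%E](eq_integral (fun x => (f x)%:E + (g x)%:E)%E) //.
rewrite !ge0_integralD //; do ?[by move=> x _; rewrite lee_fin ?mulr_ge0];
  do ?[exact: measurable_mulQ]; do ?[exact/measurable_EFinP].
by rewrite ge0_muleDr ?leeD // integral_ge0 // => x _; rewrite lee_fin.
Qed.

Lemma pulls_outZ k f : 0 <= k -> pulls_out f -> pulls_out (fun x => k * f x).
Proof.
move=> k0 [mf f0 hf]; split.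
- exact: measurable_funM.
- by move=> x; rewrite mulr_ge0.
under eq_integral do rewrite -mulrA EFinM.
under [X in (_ <= _ * X)%E]eq_integral do rewrite EFinM.
rewrite !ge0_integralZl_EFin //; do ?[by move=> x _; rewrite lee_fin ?mulr_ge0];
  do ?[exact: measurable_mulQ]; do ?[exact/measurable_EFinP].
by rewrite muleCA lee_wpmul2l ?lee_fin.
Qed.

Lemma pulls_out_sum (I : Type) (s : seq I) (f : I -> T -> R) :
  (forall i, pulls_out (f i)) -> pulls_out (fun x => \sum_(i <- s) f i x).
Proof.
move=> hf; elim: s => [|i s ih].
  by under eq_fun do rewrite big_nil; exact: pulls_out0.
by under eq_fun do rewrite big_cons; exact: pulls_outD.
Qed.

Lemma pulls_out_indic A : G A -> pulls_out (\1_A).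
Proof.
move=> GA; have mA := GM GA; split.
- exact: measurable_indic.
- by move=> x; rewrite indicE.
rewrite integral_indic // setIT.
rewrite (eq_integral ((EFin \o Q) \_ A)); last first.
  by move=> x _; rewrite patchE indicE; case: (x \in A); rewrite /= ?mul1r ?mul0r.
by rewrite -integral_mkcond; exact: intQ_le.
Qed.

Let G_measurable_EFin Z (B : set \bar R) : G_measurable G Z -> measurable B ->
  G ((EFin \o Z) @^-1` B).
Proof.
move=> GZ mB; rewrite comp_preimage; apply: GZ.
by rewrite -[X in measurable X]setTI; exact: EFin_measurable.
Qed.

Lemma pulls_out_approx Z n : G_measurable G Z ->
  pulls_out (approx setT (EFin \o Z) n).
Proof.
move=> GZ; apply: pulls_outD.
  apply: pulls_out_sum => k; apply: pulls_outZ => //; apply: pulls_out_indic.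
  rewrite /dyadic_approx; case: ifP => _ //; rewrite setTI -preimage_comp.
  by apply: G_measurable_EFin => //; apply: measurable_image_EFin; exact: measurable_itv.
apply: pulls_outZ => //; apply: pulls_out_indic; rewrite /integer_approx setTI.
rewrite (_ : [set x | _] = Z @^-1` `[n%:R, +oo[); first exact: GZ (measurable_itv _).
by apply/seteqP; split => x; rewrite /= in_itv /= andbT lee_fin.
Qed.

Lemma le_integral_pullout Z : (forall x, 0 <= Z x) -> G_measurable G Z ->
  (\int[P]_x (Z x * Q x)%:E <= c%:E * \int[P]_x (Z x)%:E)%E.
Proof.
move=> Z0 GZ.
have mZ : measurable_fun setT Z by exact: G_measurable_fun GZ.
have Z0' x : setT x -> (0 <= (EFin \o Z) x)%E by rewrite lee_fin.
pose a := approx setT (EFin \o Z).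
have a_pulls n : pulls_out (a n) := pulls_out_approx n GZ.
have a_ge0 n x : 0 <= a n x by case: (a_pulls n).
have a_nd x : {homo a^~ x : n m / (n <= m)%N >-> n <= m}.
  by move=> n m nm; have /lefP := nd_approx setT (EFin \o Z) nm; exact.
have aQ_nd x : {homo (fun n => (a n x * Q x)%:E) : n m / (n <= m)%N >-> (n <= m)%E}.
  by move=> n m nm; rewrite lee_fin ler_wpM2r // a_nd.
have -> : (\int[P]_x (Z x * Q x)%:E = \int[P]_x limn (fun n => (a n x * Q x)%:E))%E.
  apply: eq_integral => x _; apply/esym/cvg_lim => //.
  apply: cvg_EFin; first exact: nearW.
  by apply: cvgMl; exact: (cvg_approx Z0' _ (ltry _)).
have a_meas n : measurable_fun setT (a n) by case: (a_pulls n).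
have aQ_meas n : measurable_fun setT (fun x => (a n x * Q x)%:E).
  by apply/measurable_EFinP; exact: measurable_funM.
rewrite monotone_convergence //; last by move=> n x _; rewrite lee_fin mulr_ge0.
apply: lime_le.
  apply: ereal_nondecreasing_is_cvgn => n m nm; apply: ge0_le_integral => //.
  - by move=> x _; rewrite lee_fin mulr_ge0.
  - by move=> x _; exact: aQ_nd.
apply: nearW => n; case: (a_pulls n) => _ _ /le_trans; apply.
apply: lee_wpmul2l; first by rewrite lee_fin.
apply: ge0_le_integral => //; do ?[by move=> x _; rewrite lee_fin].
- exact/(measurable_EFinP setT (a n)).
- exact/(measurable_EFinP setT Z).
- by move=> x _; exact: le_approx.
Qed.

End pull_out.

Lemma integral_le_ae_bound d (T : measurableType d) (R : realType)
    (mu : {measure set T -> \bar R}) (A : set T) (f : T -> R) (s : R) :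
  measurable A -> 0 <= s -> measurable_fun A (fun x => (f x)%:E) ->
  {ae mu, forall x, f x <= s} -> (\int[mu]_(x in A) (f x)%:E <= s%:E * mu A)%E.
Proof.
move=> mA s_ge0 mf f_le; rewrite integralE -integral_cst //.
apply: (@le_trans _ _ (\int[mu]_(x in A) (fun x => (f x)%:E)^\+ x)%E).
  by rewrite -[leRHS]sube0 leeB // integral_ge0.
apply: ae_ge0_le_integral.
- exact: mA.
- by move=> x _; exact: funepos_ge0.
- exact: measurable_funepos.
- by move=> x _; rewrite lee_fin.
- exact: measurable_cst.
- by apply: filterS f_le => x fx _; rewrite funeposE /= ge_max !lee_fin fx.
Qed.

Section conditional_quadratic.
Context d (T : measurableType d) (R : realType) (P : probability T R).
Variables (G : set (set T)) (Xs Y : T -> R) (mu s2 : R).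
Hypotheses (GM : G `<=` measurable) (s2_ge0 : 0 <= s2)
  (Xs_mean : is_cond_exp P G Xs (fun=> mu))
  (Xs_var : is_cond_exp P G (fun x => (Xs x - mu) ^+ 2) Y)
  (Y_le : {ae P, forall x, Y x <= s2}).

Lemma integral_centered_quadratic_le (a b e : R) A : 0 <= e -> G A ->
  (\int[P]_(x in A) (a + b * (Xs x - mu) + e * (Xs x - mu) ^+ 2)%:E
     <= (a + e * s2)%:E * P A)%E.
Proof.
move=> e_ge0 GA; have mA := GM GA.
have [_ iX _ X_mean] := Xs_mean; have [_ iU2 iY U2_var] := Xs_var.
have sub_int h : P.-integrable setT h -> P.-integrable A h.
  exact: integrableS measurableT mA (subsetT A).
have iC k : P.-integrable A (fun=> k%:E) := finite_measure_integrable_cst P k mA.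
have iU : P.-integrable A (fun x => (Xs x - mu)%:E).
  apply: (eq_integrable mA (fun x => (Xs x)%:E - mu%:E)%E) => //.
  by apply: integrableB => //; exact: sub_int.
have U_int0 : (\int[P]_(x in A) (Xs x - mu)%:E = 0)%E.
  rewrite (eq_integral (fun x => (Xs x)%:E - (fun=> mu%:E) x)%E) //.
  rewrite integralB //; last exact: sub_int.
  by rewrite (X_mean A GA) subee // integral_cst // fin_numM ?fin_num_measure.
rewrite (eq_integral (fun x =>
  a%:E + b%:E * (Xs x - mu)%:E + e%:E * ((Xs x - mu) ^+ 2)%:E)%E); last first.
  by move=> x _; rewrite -!EFinM -!EFinD.
have ibU : P.-integrable A (fun x => b%:E * (Xs x - mu)%:E)%E.
  exact: integrableZl.
have ieU2 : P.-integrable A (fun x => e%:E * ((Xs x - mu) ^+ 2)%:E)%E.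
  by apply: integrableZl => //; exact: sub_int.
rewrite integralD //; last exact: integrableD.
rewrite integralD // !integralZl //; last exact: sub_int.
rewrite U_int0 mule0 adde0 integral_cst // (U2_var A GA).
rewrite EFinD muleDl ?fin_num_measure // leeD2l ?fin_numM ?fin_num_measure //.
rewrite EFinM -muleA lee_wpmul2l ?lee_fin //.
apply: integral_le_ae_bound => //.
by case/integrableP: iY => mY _; exact: measurable_funS mY.
Qed.

End conditional_quadratic.

Lemma expR_catoni_le (R : realType) (phi : R -> R) (sg y : R) :
  catoni_type phi -> sg = 1 \/ sg = -1 ->
  expR (sg * phi y) <= 1 + sg * y + y ^+ 2 / 2.
Proof.
move=> [_ /(_ y) [phi_ge phi_le]] [->|->].
  have q_gt0 : 0 < 1 + y + y ^+ 2 / 2 by nra.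
  by rewrite !mul1r -ler_ln ?posrE ?expR_gt0 // expRK.
have q_gt0 : 0 < 1 - y + y ^+ 2 / 2 by nra.
by rewrite !mulN1r -ler_ln ?posrE ?expR_gt0 // expRK lerNl.
Qed.

Section catoni_exponential_supermartingale.
Context d (T : measurableType d) (R : realType) (P : probability T R).
Variables (F : nat -> set (set T)) (X : nat -> T -> R) (mu sigma : R)
  (phi : R -> R) (lam : nat -> R).
Hypotheses (F_filtration : filtration F)
  (X_adapted : forall s, (0 < s)%N -> G_measurable (F s) (X s))
  (X_mean : forall s, (0 < s)%N -> is_cond_exp P (F s.-1) (X s) (fun _ => mu))
  (X_var : forall s, (0 < s)%N -> exists Y : T -> R,
      is_cond_exp P (F s.-1) (fun w => (X s w - mu) ^+ 2) Y /\
      {ae P, forall w, Y w <= sigma ^+ 2})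
  (phi_catoni : catoni_type phi).

Let F_sigma s : sigma_algebra setT (F s).
Proof. by case: F_filtration => /(_ s) []. Qed.

Let F_measurable s : F s `<=` measurable.
Proof. by case: F_filtration => /(_ s) []. Qed.

Let F_set0 s : F s set0.
Proof. by case: (F_sigma s). Qed.

Let F_nondecreasing s : F s `<=` F s.+1.
Proof. by case: F_filtration => _; apply. Qed.

Lemma catoni_sum_G_measurable m t :
  G_measurable (F t) (fun w => catoni_sum phi lam (X^~ w) m t).
Proof.
elim: t => [|t IH].
  apply/G_measurableP => //; rewrite (_ : (fun w => _) = cst 0) //.
  by apply/funext => w; rewrite /catoni_sum big_geq.
have -> : (fun w => catoni_sum phi lam (X^~ w) m t.+1) =
    (fun w => catoni_sum phi lam (X^~ w) m t)
    \+ ((fun x : R => phi (lam t.+1 * (x - m))) \o X t.+1).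
  by apply/funext => w; rewrite /catoni_sum big_nat_recr.
apply/G_measurableP => //; apply: measurable_funD; apply/G_measurableP => //.
  exact: G_measurableS IH.
apply: G_measurable_comp; last exact: X_adapted.
apply: measurableT_comp; first exact: nondecreasing_measurable phi_catoni.1.
by apply: measurable_funM => //; exact: measurable_funB.
Qed.

Lemma measurable_catoni_sum m t :
  measurable_fun setT (fun w => catoni_sum phi lam (X^~ w) m t).
Proof. exact: G_measurable_fun (catoni_sum_G_measurable m t). Qed.

Lemma catoni_step_le (sg m : R) s A : sg = 1 \/ sg = -1 -> F s A ->
  (\int[P]_(w in A) (1 + sg * (lam s.+1 * (X s.+1 w - m))
                        + (lam s.+1 * (X s.+1 w - m)) ^+ 2 / 2)%:E
   <= (1 + sg * lam s.+1 * (mu - m)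
       + lam s.+1 ^+ 2 * (sigma ^+ 2 + (mu - m) ^+ 2) / 2)%:E * P A)%E.
Proof.
move=> sg2 FA; have [Y [Y_var Y_le]] := X_var (ltn0Sn s).
set l := lam s.+1; set r := l * (mu - m).
have e_ge0 : 0 <= l ^+ 2 / 2 by rewrite divr_ge0 ?sqr_ge0.
rewrite (eq_integral (fun w => (1 + sg * r + r ^+ 2 / 2 + (sg * l + l * r) *
  (X s.+1 w - mu) + l ^+ 2 / 2 * (X s.+1 w - mu) ^+ 2)%:E)); last first.
  by move=> w _; congr EFin; rewrite /r; field.
have -> : 1 + sg * l * (mu - m) + l ^+ 2 * (sigma ^+ 2 + (mu - m) ^+ 2) / 2 =
          1 + sg * r + r ^+ 2 / 2 + l ^+ 2 / 2 * sigma ^+ 2 by rewrite /r; field.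
exact: (integral_centered_quadratic_le (@F_measurable s) (sqr_ge0 sigma)
  (X_mean (ltn0Sn s)) Y_var Y_le (1 + sg * r + r ^+ 2 / 2) (sg * l + l * r) e_ge0 FA).
Qed.

Lemma catoni_mgf_step (sg m : R) s : sg = 1 \/ sg = -1 ->
  (\int[P]_w (expR (sg * catoni_sum phi lam (X^~ w) m s.+1))%:E
   <= (expR (sg * lam s.+1 * (mu - m)
             + lam s.+1 ^+ 2 * (sigma ^+ 2 + (mu - m) ^+ 2) / 2))%:E
      * \int[P]_w (expR (sg * catoni_sum phi lam (X^~ w) m s))%:E)%E.
Proof.
move=> sg2; set y := fun w => lam s.+1 * (X s.+1 w - m).
set Q := fun w => 1 + sg * y w + y w ^+ 2 / 2.
set k := sg * lam s.+1 * (mu - m) + _.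
set Z := fun w => expR (sg * catoni_sum phi lam (X^~ w) m s).
have expR_le_Q w : expR (sg * phi (y w)) <= Q w := expR_catoni_le _ phi_catoni sg2.
have Q_ge0 w : 0 <= Q w := le_trans (expR_ge0 _) (expR_le_Q w).
have c_ge0 : 0 <= 1 + k.
  have := sqr_ge0 (lam s.+1 * sigma).
  by rewrite /k; case: sg2 => ->; [have := sqr_ge0 (1 + lam s.+1 * (mu - m))
                               | have := sqr_ge0 (1 - lam s.+1 * (mu - m))]; nra.
have mX : measurable_fun setT (X s.+1).
  exact: G_measurable_fun (@F_measurable s.+1) (X_adapted (ltn0Sn s)).
have my : measurable_fun setT y.
  by apply: measurable_funM => //; exact: measurable_funB.
have mQ : measurable_fun setT Q.
  apply: measurable_funD; first by apply: measurable_funD => //; exact: measurable_funM.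
  by apply: measurable_funM => //; exact: measurable_funX.
have Z_G : G_measurable (F s) Z.
  apply: (G_measurable_comp (g := fun x => expR (sg * x))).
    by apply: measurableT_comp => //; exact: measurable_expR.
  exact: catoni_sum_G_measurable.
have Z_ge0 w : 0 <= Z w by exact: expR_ge0.
have mZ := G_measurable_fun (@F_measurable s) Z_G.
apply: le_trans (_ : _ <= (1 + k)%:E * \int[P]_w (Z w)%:E)%E _; last first.
  apply: lee_wpmul2r; last by rewrite lee_fin; exact: expR_ge1Dx.
  by apply: integral_ge0 => w _; rewrite lee_fin.
have step_le A : F s A -> (\int[P]_(x in A) (Q x)%:E <= (1 + k)%:E * P A)%E.
  by move=> FA; rewrite /k addrA; exact: catoni_step_le.
apply: le_trans (le_integral_pullout (@F_measurable s) (@F_set0 s) c_ge0 Q_ge0 mQ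
  step_le Z_ge0 Z_G).
apply: ge0_le_integral.
- exact: measurableT.
- by move=> w _; rewrite lee_fin expR_ge0.
- apply/(measurable_EFinP setT); apply: measurableT_comp; first exact: measurable_expR.
  by apply: measurable_funM => //; exact: measurable_catoni_sum.
- by apply/(measurable_EFinP setT); exact: measurable_funM.
move=> w _; rewrite lee_fin /catoni_sum big_nat_recr //= mulrDr expRD.
by apply: ler_wpM2l; [exact: expR_ge0 | exact: expR_le_Q].
Qed.

Lemma catoni_mgf_le (sg m : R) t : sg = 1 \/ sg = -1 ->
  (\int[P]_w (expR (sg * catoni_sum phi lam (X^~ w) m t))%:E <=
   (expR (\sum_(1 <= i < t.+1) (sg * lam i * (mu - m)
       + lam i ^+ 2 * (sigma ^+ 2 + (mu - m) ^+ 2) / 2)))%:E)%E.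
Proof.
move=> sg2; elim: t => [|s IH].
  under eq_integral do rewrite /catoni_sum big_geq // mulr0 expR0.
  by rewrite big_geq // expR0 integral_cst // mul1e probability_le1.
apply: le_trans (catoni_mgf_step m s sg2) _.
rewrite big_nat_recr //= (expRD (\sum_(1 <= i < s.+1) _)) EFinM [leRHS]muleC.
by rewrite lee_wpmul2l ?lee_fin ?expR_ge0.
Qed.

Lemma catoni_tail_le (sg m a : R) t : sg = 1 \/ sg = -1 ->
  (P [set w | sg * (mu - m) * \sum_(1 <= i < t.+1) lam i
              + (sigma ^+ 2 + (mu - m) ^+ 2) / 2 * \sum_(1 <= i < t.+1) lam i ^+ 2
              + a <= sg * catoni_sum phi lam (X^~ w) m t]%R
   <= (expR (- a))%:E)%E.
Proof.
move=> sg2.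
have mS : measurable_fun setT (fun w => sg * catoni_sum phi lam (X^~ w) m t).
  by apply: measurable_funM => //; exact: measurable_catoni_sum.
apply: le_trans (markov_expR P _ mS) _.
apply: le_trans (lee_wpmul2r _ (catoni_mgf_le m t sg2)) _.
  by rewrite lee_fin expR_ge0.
rewrite -EFinM -expRD lee_fin ler_expR !mulr_sumr -big_split /=.
rewrite (eq_bigr (fun i => sg * (mu - m) * lam i
                           + (sigma ^+ 2 + (mu - m) ^+ 2) / 2 * lam i ^+ 2)); last first.
  by move=> i _; field.
lra.
Qed.

Lemma catoni_tail_at_root (sg delta a b : R) t : sg = 1 \/ sg = -1 ->
  (\sum_(1 <= i < t.+1) lam i ^+ 2) * delta ^+ 2 / 2
    - (\sum_(1 <= i < t.+1) lam i) * delta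
    + (sigma ^+ 2 * (\sum_(1 <= i < t.+1) lam i ^+ 2) + a + b) = 0 ->
  (P [set w | - (sigma ^+ 2 * (\sum_(1 <= i < t.+1) lam i ^+ 2) / 2) - b
              <= sg * catoni_sum phi lam (X^~ w) (mu + sg * delta) t]%R
   <= (expR (- a))%:E)%E.
Proof.
move=> sg2; have := catoni_tail_le (mu + sg * delta) a t sg2.
set L1 := \sum_(1 <= i < t.+1) lam i; set L2 := \sum_(1 <= i < t.+1) lam i ^+ 2.
move=> + root; suff -> : sg * (mu - (mu + sg * delta)) * L1
          + (sigma ^+ 2 + (mu - (mu + sg * delta)) ^+ 2) / 2 * L2 + a
          = - (sigma ^+ 2 * L2 / 2) - b by [].
by move: root; case: sg2 => ->; nra.
Qed.

Lemma measurable_catoni_ge (sg m lo : R) t :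
  measurable [set w | lo <= sg * catoni_sum phi lam (X^~ w) m t].
Proof.
rewrite -[X in measurable X]setTI; apply: (measurable_fun_le (f := cst lo)) => //.
by apply: measurable_funM => //; exact: measurable_catoni_sum.
Qed.

End catoni_exponential_supermartingale.

Theorem theorem4 (d : measure_display) (T : measurableType d) (R : realType)
  (P : probability T R) (F : nat -> set (set T)) (X : nat -> T -> R)
  (mu sigma alpha eps : R) (phi : R -> R) (lam : nat -> R) (t : nat) :
  filtration F -> trivial_sigma (F 0%N) ->
  (forall s, (0 < s)%N -> G_measurable (F s) (X s)) ->
  (forall s, (0 < s)%N -> is_cond_exp P (F s.-1) (X s) (fun _ => mu)) ->
  (forall s, (0 < s)%N -> exists Y : T -> R,
      is_cond_exp P (F s.-1) (fun w => (X s w - mu) ^+ 2) Y /\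
      {ae P, forall w, Y w <= sigma ^+ 2}) ->
  0 < alpha < 1 ->
  catoni_type phi ->
  (forall s, (0 < s)%N -> 0 < lam s) ->
  0 < eps < 1 -> (0 < t)%N ->
  0 <= (\sum_(1 <= i < t.+1) lam i) ^+ 2
       - 2 * (\sum_(1 <= i < t.+1) lam i ^+ 2)
         * (sigma ^+ 2 * (\sum_(1 <= i < t.+1) lam i ^+ 2)
            + ln (2 / eps) + ln (2 / alpha)) ->
  exists A : set T, measurable A /\
    A `<=` [set w | (width (CI_catoni phi lam sigma alpha (fun i => X i w) t)
                     <= (4 * (sigma ^+ 2 * (\sum_(1 <= i < t.+1) lam i ^+ 2)
                              + ln (2 / eps) + ln (2 / alpha))
                         / (\sum_(1 <= i < t.+1) lam i))%:E)%E] /\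
    ((1 - eps)%:E <= P A)%E.
Proof.
move=> F_filt _ X_adapted X_mean X_var alpha01 phi_catoni lam_gt0 eps01 t_gt0
  disc_ge0.
set L1 := \sum_(1 <= i < t.+1) lam i; set L2 := \sum_(1 <= i < t.+1) lam i ^+ 2.
set C := _ + ln (2 / eps) + ln (2 / alpha).
have ln2_gt0 (x : R) : 0 < x < 1 -> 0 < ln (2 / x).
  by case/andP=> x_gt0 x_lt1; rewrite ln_gt0 // ltr_pdivlMr // mul1r; lra.
have L1_gt0 : 0 < L1 := sumr_nat_gt0 t_gt0 lam_gt0.
have L2_gt0 : 0 < L2 by apply: sumr_nat_gt0 => // i /lam_gt0 /exprn_gt0; apply.
have C_ge0 : 0 <= C.
  have := ln2_gt0 _ eps01; have := ln2_gt0 _ alpha01.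
  by have := mulr_ge0 (sqr_ge0 sigma) (ltW L2_gt0); rewrite /C; lra.
have [ds ds_root ds_le] := quadratic_small_root L2_gt0 L1_gt0 C_ge0 disc_ge0.
pose Bad sg := [set w | - (sigma ^+ 2 * L2 / 2) - ln (2 / alpha)
                        <= sg * catoni_sum phi lam (X^~ w) (mu + sg * ds) t].
have PBad sg : sg = 1 \/ sg = -1 -> (P (Bad sg) <= (eps / 2)%:E)%E.
  move=> sg2; rewrite (_ : eps / 2 = expR (- ln (2 / eps))); last first.
    by rewrite expRN lnK ?invf_div // posrE divr_gt0 //; case/andP: eps01.
  exact: (catoni_tail_at_root F_filt X_adapted X_mean X_var phi_catoni sg2 ds_root).
have mBad sg : measurable (Bad sg).
  exact: measurable_catoni_ge lam F_filt X_adapted phi_catoni _ _ _ _.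
exists (~` (Bad 1 `|` Bad (-1))); split; first exact/measurableC/measurableU.
split; last first.
  rewrite (_ : 1 - eps = 1 - (eps / 2 + eps / 2)); last by field.
  by apply: probability_setC_setU_ge; rewrite ?PBad; auto.
move=> w /= /not_orP[/negP good_hi /negP good_lo].
rewrite -ltNge mul1r in good_hi; rewrite -ltNge !mulN1r in good_lo.
have S_gt : sigma ^+ 2 * L2 / 2 + ln (2 / alpha)
            < catoni_sum phi lam (X^~ w) (mu - ds) t by lra.
apply: le_trans (width_CI_catoni_le phi_catoni lam_gt0 good_hi S_gt) _.
by rewrite lee_fin; lra.
Qed.
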